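(* In the pBeeGees protocol (setting described in the context), if a correct process $p$ enters view $v$, then for every view $v'<v$ some correct process has entered view $v'$.
   Context: Setting (pBeeGees view synchronization). $n=3f+1$ processes, at most $f$ Byzantine, the rest correct; partial synchrony with bound $\Delta$ after GST. Views $v=1,2,\dots$ with leaders $l_v$. A process enters view $v+1$ only upon obtaining either a quorum certificate (QC: $n-f$ votes from distinct processes for the block of view $v$) or a timeout certificate (TC: $n-f$ timeout messages for view $v$ from distinct processes). A correct process in view $v$ that has not advanced after waiting time $F(v)$ times out and broadcasts a timeout message for view $v$; a correct process that receives $f+1$ timeout messages for view $v$ also broadcasts its own timeout message for view $v$. *)

From mathcomp Require Import all_boot.
Set Implicit Arguments. Unset Strict Implicit. Unset Printing Implicit Defensive.

Inductive msg (B : Type) : Type :=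
  | Vote (u : nat) (b : B)
  | Timeout (u : nat).
Arguments Timeout {B} u.

Section Model.
Variables (n f : nat) (B : Type).
(* Discrete global time t : nat.
   view p t       : the view process p is in at time t.
   sent q m t     : q sends (broadcasts) message m at time t.
   recv p q m t   : p has received, by time t, message m authenticated as sent by q. *)
Variables (view : 'I_n -> nat -> nat)
          (sent : 'I_n -> msg B -> nat -> Prop)
          (recv : 'I_n -> 'I_n -> msg B -> nat -> Prop).

Definition has_QC (p : 'I_n) (u t : nat) : Prop :=
  exists (b : B) (S : {set 'I_n}), n - f <= #|S| /\ forall q, q \in S -> recv p q (Vote u b) t.

Definition has_TC (p : 'I_n) (u t : nat) : Prop :=
  exists S : {set 'I_n}, n - f <= #|S| /\ forall q, q \in S -> recv p q (Timeout u) t.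

Definition pbeegees_rules (correct : {set 'I_n}) (F : nat -> nat) : Prop :=
  (forall p, p \in correct -> view p 0 = 1) /\
  (forall p t, p \in correct -> view p t.+1 <> view p t ->
     exists u, view p t.+1 = u.+1 /\ 1 <= u /\ (has_QC p u t.+1 \/ has_TC p u t.+1)) /\
  (* authenticated channels: a message attributed to a correct sender was sent earlier *)
  (forall p q m t, q \in correct -> recv p q m t -> exists2 t', t' < t & sent q m t') /\
  (forall q u b t, q \in correct -> sent q (Vote u b) t -> view q t = u) /\
  (forall q u t, q \in correct -> sent q (Timeout u) t ->
     (exists t0, t0 + F u <= t /\ forall s, t0 <= s <= t -> view q s = u) \/
     (exists S : {set 'I_n}, f.+1 <= #|S| /\ forall r, r \in S -> recv q r (Timeout u) t)).

Definition enters (p : 'I_n) (v : nat) : Prop := exists t, view p t = v.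

End Model.

(* A correct process leaves view u only with a QC or a TC for u, each carrying
   n - f > f signatures, so one of them comes from a correct process.  A correct
   vote for u is cast while in view u.  A correct timeout for u is either sent
   while in view u or triggered by f + 1 earlier timeouts for u, one of them
   correct, so induction on time shows that some correct process was in view u. *)
From mathcomp Require Import all_boot.
From mathcomp Require Import zify.

Set Implicit Arguments.
Unset Strict Implicit.
Unset Printing Implicit Defensive.

Lemma nat_down_ind (P : nat -> Prop) (m : nat) :
  (forall w, m <= w -> P w.+1 -> P w) -> forall v, m <= v -> P v -> P m.
Proof.
move=> step; elim=> [|v IHv]; first by rewrite leqn0 => /eqP <-.
rewrite leq_eqVlt => /orP[/eqP <- // | lt_mv] Pv.
exact/IHv/step.
Qed.

Lemma exists_change_to (T : eqType) (g : nat -> T) (x : T) (t : nat) :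
  g 0 != x -> g t = x -> exists s, g s.+1 = x /\ g s.+1 <> g s.
Proof.
move=> g0x; elim: t => [|t IHt] gtx; first by rewrite gtx eqxx in g0x.
have [gt_x | gt_neq] := eqVneq (g t) x; first exact: IHt.
by exists t; split=> // eq_gt; rewrite -eq_gt gtx eqxx in gt_neq.
Qed.

Lemma card_gt_faulty_meets_correct (n f : nat) (correct S : {set 'I_n}) :
  #|~: correct| <= f -> f < #|S| -> exists2 q, q \in S & q \in correct.
Proof.
move=> few_faulty big_S.
have [q /andP[qS qc] | no_q] := pickP [predI S & correct]; first by exists q.
suff : S \subset ~: correct.
  by move/subset_leq_card/leq_trans/(_ few_faulty); rewrite leqNgt big_S.
by apply/subsetP=> q qS; rewrite inE; move: (no_q q); rewrite /= qS /= => ->.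
Qed.

Section CorrectViews.

Variables (n f : nat) (B : Type).
Variables (view : 'I_n -> nat -> nat)
          (sent : 'I_n -> msg B -> nat -> Prop)
          (recv : 'I_n -> 'I_n -> msg B -> nat -> Prop).
Variables (correct : {set 'I_n}) (F : nat -> nat).

Hypothesis quorum_gt_faulty : f < n - f.
Hypothesis few_faulty : #|~: correct| <= f.
Hypothesis start_view1 : forall p, p \in correct -> view p 0 = 1.
Hypothesis advance_by_cert : forall p t, p \in correct -> view p t.+1 <> view p t ->
  exists u, view p t.+1 = u.+1 /\ 1 <= u /\ (has_QC f recv p u t.+1 \/ has_TC f recv p u t.+1).
Hypothesis authenticated : forall p q m t, q \in correct -> recv p q m t ->
  exists2 t', t' < t & sent q m t'.
Hypothesis vote_in_view : forall q u b t, q \in correct -> sent q (Vote u b) t ->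
  view q t = u.
Hypothesis timeout_rule : forall q u t, q \in correct -> sent q (Timeout u) t ->
  (exists t0, t0 + F u <= t /\ forall s, t0 <= s <= t -> view q s = u) \/
  (exists S : {set 'I_n}, f.+1 <= #|S| /\ forall r, r \in S -> recv q r (Timeout u) t).

Definition correct_enters (u : nat) : Prop :=
  exists2 q, q \in correct & enters view q u.

Lemma recv_many_sent_correct (p : 'I_n) (m : msg B) (t : nat) (S : {set 'I_n}) :
  f < #|S| -> (forall q, q \in S -> recv p q m t) ->
  exists q t', [/\ q \in correct, t' < t & sent q m t'].
Proof.
move=> big_S recvS.
have [q qS qc] := card_gt_faulty_meets_correct few_faulty big_S.
have [t' lt_t't sent_q] := authenticated qc (recvS q qS).
by exists q, t'.
Qed.

Lemma timeout_sent_correct_enters (t : nat) (q : 'I_n) (u : nat) :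
  q \in correct -> sent q (Timeout u) t -> correct_enters u.
Proof.
elim/ltn_ind: t q => t IHt q qc sent_q.
case: (timeout_rule qc sent_q) => [[t0 [t0_le_t in_u]] | [S [big_S recvS]]].
  exists q => //; exists t; apply: in_u.
  by rewrite leqnn andbT (leq_trans (leq_addr _ _) t0_le_t).
have [r [t' [rc lt_t't sent_r]]] := recv_many_sent_correct big_S recvS.
exact: IHt lt_t't r rc sent_r.
Qed.

Lemma correct_enters_pred (w : nat) :
  0 < w -> correct_enters w.+1 -> correct_enters w.
Proof.
move=> w_gt0 [p pc [t in_w]].
have start_ne : view p 0 != w.+1 by rewrite start_view1 // eqSS eq_sym -lt0n.
have [s [in_w_s changed]] := exists_change_to start_ne in_w.
have [u [in_u [_ cert]]] := advance_by_cert pc changed.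
have w_u : w = u by apply: succn_inj; rewrite -in_u.
subst u.
case: cert => [[b [S [big_S recvS]]] | [S [big_S recvS]]];
  have [r [t' [rc _ sent_r]]] :=
    recv_many_sent_correct (leq_trans quorum_gt_faulty big_S) recvS.
- by exists r => //; exists t'; exact: vote_in_view sent_r.
- exact: timeout_sent_correct_enters sent_r.
Qed.

End CorrectViews.

Theorem lemma6 (n f : nat) (B : Type)
    (view : 'I_n -> nat -> nat)
    (sent : 'I_n -> msg B -> nat -> Prop)
    (recv : 'I_n -> 'I_n -> msg B -> nat -> Prop)
    (correct : {set 'I_n}) (F : nat -> nat) :
  n = 3 * f + 1 ->
  #|~: correct| <= f ->
  pbeegees_rules f view sent recv correct F ->
  forall (p : 'I_n) (v : nat), p \in correct -> enters view p v ->
  forall v' : nat, 1 <= v' < v ->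
  exists2 q : 'I_n, q \in correct & enters view q v'.
Proof.
move=> n_eq few_faulty [start [advance [auth [vote timeout]]]] p v pc in_v v'.
move=> /andP[v'_gt0 lt_v'v].
have quorum : f < n - f by rewrite n_eq; lia.
apply: (@nat_down_ind (correct_enters view correct) v' _ v (ltnW lt_v'v));
  last by exists p.
move=> w le_v'w.
exact: (correct_enters_pred quorum few_faulty start advance auth vote timeout
  (leq_trans v'_gt0 le_v'w)).
Qed.
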